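(* Let $I_n$ denote the number of inversion sequences of length $n$ avoiding all of the patterns $100$, $102$, $201$ (with $I_0=1$). Then $$\sum_{n\ge0} I_n z^n=\frac{2+z-10z^2+4z^3-(2-3z)\sqrt{1-4z-4z^2}}{8z(1-z)^2}.$$
   Context: An inversion sequence of length $n$ is an integer sequence $(a_1,\dots,a_n)$ with $0\le a_i<i$ for all $i$. A pattern is a sequence $\sigma$ of non-negative integers containing every value from $0$ to $\max(\sigma)$; the reduction of a sequence replaces its smallest values by $0$, the next smallest by $1$, etc. A sequence $a$ contains $\sigma$ if some (not necessarily consecutive) subsequence of $a$ has reduction $\sigma$; otherwise $a$ avoids $\sigma$. Equivalently, these are the inversion sequences with no $i<j<k$ such that $a_i>a_j$, $a_j\le a_k$ and $a_i\ne a_k$. The square root is the power series with constant term $1$. *)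

From mathcomp Require Import all_boot all_algebra.
Set Implicit Arguments. Unset Strict Implicit. Unset Printing Implicit Defensive.
Import GRing.Theory Num.Theory.

Definition same_order (s sigma : seq nat) : bool :=
  (size s == size sigma) &&
  [forall i : 'I_(size s), forall j : 'I_(size s),
     ((nth 0 s i < nth 0 s j) == (nth 0 sigma i < nth 0 sigma j)) &&
     ((nth 0 s i == nth 0 s j) == (nth 0 sigma i == nth 0 sigma j))]%N.

Definition contains (a sigma : seq nat) : bool :=
  [exists m : (size a).-tuple bool, same_order (mask m a) sigma].

Definition avoids (a sigma : seq nat) : bool := ~~ contains a sigma.

(* An inversion sequence of length n, 0-indexed: a_i <= i (i.e. 0 <= a_{i+1} < i+1). *)
Definition seq_of n (a : {ffun 'I_n -> 'I_n}) : seq nat :=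
  [seq nat_of_ord (a i) | i <- enum 'I_n].

Definition is_inv_seq n (a : {ffun 'I_n -> 'I_n}) : bool :=
  [forall i : 'I_n, (a i <= i)%N].

Definition I_count (n : nat) : nat :=
  #|[set a : {ffun 'I_n -> 'I_n} | is_inv_seq a &&
      [&& avoids (seq_of a) [:: 1; 0; 0],
          avoids (seq_of a) [:: 1; 0; 2] &
          avoids (seq_of a) [:: 2; 0; 1]]]|.

Definition fps := nat -> rat.
Definition fps_mul (f g : fps) : fps :=
  fun n => (\sum_(i < n.+1) f i * g (n - i)%N)%R.
Definition fps_of_poly (p : {poly rat}) : fps := fun n => (p`_n)%R.

(* A weakly increasing inversion sequence avoids 100, 102 and 201; once it
   descends to a value v below its current maximum L, with S the largest
   smaller value so far, the entries after v form a strictly decreasing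
   sequence below v if v < S, and a run of entries equal to L followed by a
   strictly decreasing sequence below v if S <= v.  Counting these tails by
   binomial sums expresses I_n through weakly increasing inversion sequences
   (counted by Catalan numbers) weighted by L and S.  The resulting recurrences
   for their polynomial generating functions are solved modulo X^(N+1) by the
   kernel method, whose kernel root u = (1 - sqrt(1 - 4z - 4z^2)) / 2 is the
   power series with u (1 - u) = z (1 + z). *)

From mathcomp Require Import all_boot all_algebra zify ring.
Set Implicit Arguments. Unset Strict Implicit. Unset Printing Implicit Defensive.

(** * Avoidance as a forbidden-triple condition *)

Definition forbidden (x y z : nat) := (y < x) && (y <= z) && (x != z).

Lemma contains_size3 (s sigma : seq nat) : size sigma = 3 ->
  contains s sigma <->
  exists x y z, subseq [:: x; y; z] s /\ same_order [:: x; y; z] sigma.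
Proof.
move=> size_sigma; split.
  move=> /existsP [m so_m].
  have size_m : size (mask m s) = 3.
    by move: so_m; rewrite /same_order size_sigma => /andP [/eqP -> _].
  move: so_m (mask_subseq m s).
  by case: (mask m s) size_m => [|x [|y [|z [|w l]]]] //= _; exists x, y, z.
move=> [x [y [z [/subseqP [m size_m ->] so_xyz]]]].
have size_m' : size m == size s by apply/eqP.
by apply/existsP; exists (Tuple size_m').
Qed.

Lemma same_order3P (x y z a b c : nat) (sigma := [:: a; b; c]) :
  reflect (forall i j, i < 3 -> j < 3 ->
     ((nth 0 [:: x; y; z] i < nth 0 [:: x; y; z] j) == (nth 0 sigma i < nth 0 sigma j)) &&
     ((nth 0 [:: x; y; z] i == nth 0 [:: x; y; z] j) == (nth 0 sigma i == nth 0 sigma j)))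
    (same_order [:: x; y; z] sigma).
Proof.
rewrite /same_order /=.
apply: (iffP forallP) => [so i j lti ltj | so i].
  by move/forallP: (so (Ordinal lti)) => /(_ (Ordinal ltj)).
by apply/forallP => j; apply: so.
Qed.

Lemma same_order_forbidden x y z :
  [|| same_order [:: x; y; z] [:: 1; 0; 0], same_order [:: x; y; z] [:: 1; 0; 2]
    | same_order [:: x; y; z] [:: 2; 0; 1]] = forbidden x y z.
Proof.
rewrite /forbidden; apply/idP/idP.
  case/or3P => /same_order3P so; have := so 1 0 isT isT; have := so 1 2 isT isT.
  - by have := so 0 2 isT isT; rewrite /=; lia.
  - by have := so 0 2 isT isT; rewrite /=; lia.
  - by have := so 2 0 isT isT; rewrite /=; lia.
move=> forb; apply/or3P.
have [eq_yz|ne_yz] := eqVneq y z; last have [lt_zx|le_xz] := ltnP z x.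
- by apply: Or31; apply/same_order3P => -[|[|[|i]]] [|[|[|j]]] //= _ _; lia.
- by apply: Or33; apply/same_order3P => -[|[|[|i]]] [|[|[|j]]] //= _ _; lia.
- by apply: Or32; apply/same_order3P => -[|[|[|i]]] [|[|[|j]]] //= _ _; lia.
Qed.

Lemma contains_forbiddenP (s : seq nat) :
  [|| contains s [:: 1; 0; 0], contains s [:: 1; 0; 2] | contains s [:: 2; 0; 1]] <->
  exists x y z, subseq [:: x; y; z] s /\ forbidden x y z.
Proof.
split.
  case/or3P => /contains_size3 -/(_ erefl) [x [y [z [sub_s so]]]];
  by exists x, y, z; rewrite -same_order_forbidden so ?orbT.
move=> [x [y [z [sub_s]]]]; rewrite -same_order_forbidden.
by case/or3P => so; apply/or3P; [apply: Or31|apply: Or32|apply: Or33];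
  apply/contains_size3 => //; exists x, y, z.
Qed.

(* Inversion sequences are handled reversed, newest entry first, so that
   extending a sequence by one entry is [cons]. *)
Fixpoint closes_forbidden (v : nat) (r : seq nat) : bool :=
  if r is y :: r' then
    ((y <= v) && has (fun x => (y < x) && (x != v)) r') || closes_forbidden v r'
  else false.

Fixpoint is_rinv (r : seq nat) : bool :=
  if r is v :: r' then (v <= size r') && is_rinv r' else true.

Fixpoint admissible (r : seq nat) : bool :=
  if r is v :: r' then [&& v <= size r', ~~ closes_forbidden v r' & admissible r']
  else true.

Lemma closes_forbiddenP v (r : seq nat) :
  closes_forbidden v r <-> exists y x, subseq [:: y; x] r /\ forbidden x y v.
Proof.
rewrite /forbidden; elim: r => [|w r IH] /=; first by split => // -[y [x []]].
split.
  case/orP => [/andP [le_wv /hasP [x r_x /andP [lt_wx ne_xv]]]|/IH [y [x [sub_r forb]]]].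
    by exists w, x; rewrite eqxx sub1seq r_x; split => //; lia.
  by exists y, x; split => //; apply: subseq_trans sub_r (subseq_cons r w).
move=> [y [x []]]; have [<-|ne_yw] := eqVneq y w => sub_r forb; apply/orP.
  left; rewrite sub1seq in sub_r; apply/andP; split; first lia.
  by apply/hasP; exists x => //; lia.
by right; apply/IH; exists y, x.
Qed.

Lemma admissibleP (r : seq nat) :
  admissible r <->
  is_rinv r /\ ~ (exists x y z, subseq [:: z; y; x] r /\ forbidden x y z).
Proof.
elim: r => [|v r IH] /=; first by split => // _; split => // -[x [y [z []]]].
split.
  move=> /and3P [le_v no_close /IH [rinv_r avoid_r]]; split; first by rewrite le_v.
  move=> [x [y [z []]]]; have [->|ne_zv] := eqVneq z v => sub_r forb.
    by move/negP: no_close; apply; apply/closes_forbiddenP; exists y, x.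
  by apply: avoid_r; exists x, y, z.
move=> [/andP [le_v rinv_r] avoid_vr]; apply/and3P; split => //.
  apply/negP => /closes_forbiddenP [y [x [sub_r forb]]]; apply: avoid_vr.
  by exists x, y, v; rewrite /= eqxx sub_r.
apply/IH; split => // -[x [y [z [sub_r forb]]]]; apply: avoid_vr.
by exists x, y, z; split => //; apply: subseq_trans sub_r (subseq_cons r v).
Qed.

Lemma admissible_rinv (r : seq nat) : admissible r -> is_rinv r.
Proof. by move/admissibleP => []. Qed.

Lemma is_rinv_rev (s : seq nat) :
  is_rinv (rev s) = [forall i : 'I_(size s), nth 0 s i <= i].
Proof.
elim/last_ind: s => [|s v IH]; first by apply/esym/forallP => -[].
rewrite rev_rcons /= size_rev IH size_rcons; apply/andP/forallP.
  move=> [le_v /forallP le_s] [i lt_i] /=; rewrite nth_rcons.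
  case: ltnP => [lt_is|le_si]; first exact: (le_s (Ordinal lt_is)).
  have -> : i = size s by lia.
  by rewrite eqxx.
move=> le_sv; split.
  by have := le_sv (Ordinal (ltnSn (size s))); rewrite /= nth_rcons ltnn eqxx.
apply/forallP => -[i lt_is].
by have := le_sv (Ordinal (leqW lt_is)); rewrite /= nth_rcons lt_is.
Qed.

Lemma size_seq_of n (a : {ffun 'I_n -> 'I_n}) : size (seq_of a) = n.
Proof. by rewrite size_map size_enum_ord. Qed.

Lemma nth_seq_of n (a : {ffun 'I_n -> 'I_n}) (i : 'I_n) : nth 0 (seq_of a) i = a i.
Proof. by rewrite (nth_map i) ?size_enum_ord // nth_ord_enum. Qed.

Lemma is_inv_seqE n (a : {ffun 'I_n -> 'I_n}) : is_inv_seq a = is_rinv (rev (seq_of a)).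
Proof.
rewrite is_rinv_rev; apply/forallP/forallP => le_a [i lt_i].
  have lt_in : i < n by rewrite -(size_seq_of a).
  by rewrite (nth_seq_of a (Ordinal lt_in)); apply: le_a.
have lt_ia : i < size (seq_of a) by rewrite size_seq_of.
by have := le_a (Ordinal lt_ia); rewrite /= (nth_seq_of a (Ordinal lt_i)).
Qed.

Lemma avoiding_inv_seqE n (a : {ffun 'I_n -> 'I_n}) :
  is_inv_seq a && [&& avoids (seq_of a) [:: 1; 0; 0],
    avoids (seq_of a) [:: 1; 0; 2] & avoids (seq_of a) [:: 2; 0; 1]]
  = admissible (rev (seq_of a)).
Proof.
rewrite /avoids -!negb_or is_inv_seqE; apply/andP/idP.
  move=> [rinv_a /negP avoid_a]; apply/admissibleP; split => // -[x [y [z [sub_a forb]]]].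
  by apply/avoid_a/contains_forbiddenP; exists x, y, z; rewrite -subseq_rev.
move/admissibleP=> [rinv_a avoid_a]; split => //; apply/negP.
move/contains_forbiddenP=> [x [y [z [sub_a forb]]]]; apply: avoid_a.
by exists x, y, z; rewrite -subseq_rev in sub_a.
Qed.

Fixpoint rinv_seqs (n : nat) : seq (seq nat) :=
  if n is n'.+1 then [seq v :: r | r <- rinv_seqs n', v <- index_iota 0 n]
  else [:: [::]].

Lemma rinv_seqsS n :
  rinv_seqs n.+1 = [seq v :: r | r <- rinv_seqs n, v <- index_iota 0 n.+1].
Proof. by []. Qed.

Lemma mem_rinv_seqs n (r : seq nat) : (r \in rinv_seqs n) = (size r == n) && is_rinv r.
Proof.
elim: n r => [|n IH] [|v r] //.
  by apply/negbTE/allpairsPdep => -[r' [v' []]].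
apply/allpairsPdep/idP => [[r' [v' [r'_n v'_n [-> ->]]]]|].
  move: r'_n v'_n; rewrite IH mem_index_iota /= => /andP [/eqP -> ->].
  by rewrite eqxx andbT.
move=> /andP [size_r /andP [le_v rinv_r]]; exists r, v.
move/eqP: size_r => [size_r].
by rewrite IH size_r eqxx mem_index_iota -size_r ltnS le_v.
Qed.

Lemma rinv_seqs_uniq n : uniq (rinv_seqs n).
Proof.
elim: n => [|n IH] //.
by apply: allpairs_uniq => // [|[r v] [r' v'] _ _ /= [-> ->]]; first exact: iota_uniq.
Qed.

Fixpoint n_ext (r : seq nat) (t : nat) {struct t} : nat :=
  if t is t'.+1 then
    \sum_(0 <= v < (size r).+1 | ~~ closes_forbidden v r) n_ext (v :: r) t'
  else 1.

Lemma n_extS r t :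
  n_ext r t.+1 = \sum_(0 <= v < (size r).+1 | ~~ closes_forbidden v r) n_ext (v :: r) t.
Proof. by []. Qed.

Lemma sum_n_ext t m :
  \sum_(r <- rinv_seqs m | admissible r) n_ext r t = count admissible (rinv_seqs (m + t)).
Proof.
elim: t m => [|t IH] m; first by rewrite addn0 -sum1_count.
rewrite -addSnnS -IH rinv_seqsS big_mkcond [RHS]big_mkcond big_allpairs_dep /=.
apply: eq_big_seq => r; rewrite mem_rinv_seqs => /andP [/eqP size_r _].
rewrite size_r; case: (admissible r); last by apply/esym/big1 => v _; rewrite !andbF.
rewrite big_mkcond; apply: eq_big_nat => v /andP [_ lt_v].
by rewrite -ltnS lt_v andbT.
Qed.

Lemma I_count_admissible n : I_count n = count admissible (rinv_seqs n).
Proof.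
rewrite /I_count cardE -size_filter -(size_map (fun a => rev (seq_of a))).
apply: perm_size; apply: uniq_perm.
- rewrite map_inj_uniq ?enum_uniq // => a b /(congr1 rev); rewrite !revK => eq_ab.
  by apply/ffunP => i; apply: val_inj; rewrite /= -!nth_seq_of eq_ab.
- by rewrite filter_uniq // rinv_seqs_uniq.
move=> r; rewrite mem_filter mem_rinv_seqs; apply/mapP/idP.
  move=> [a]; rewrite mem_enum inE avoiding_inv_seqE => adm_a ->.
  by rewrite adm_a size_rev size_seq_of eqxx admissible_rinv.
move=> /andP [adm_r /andP [/eqP size_r rinv_r]].
pose a : {ffun 'I_n -> 'I_n} := [ffun i : 'I_n => insubd i (nth 0 (rev r) i)].
have seq_of_a : seq_of a = rev r.
  apply: (@eq_from_nth _ 0) => [|i]; first by rewrite size_seq_of size_rev size_r.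
  rewrite size_seq_of => lt_in.
  rewrite (nth_seq_of a (Ordinal lt_in)) ffunE val_insubd /= ifT //.
  move: rinv_r; rewrite -[r]revK is_rinv_rev => /forallP.
  rewrite size_rev revK size_r => /(_ (Ordinal lt_in)) /=; lia.
exists a; last by rewrite seq_of_a revK.
by rewrite mem_enum inE avoiding_inv_seqE seq_of_a revK.
Qed.

Lemma I_count_n_ext n : I_count n = n_ext [::] n.
Proof. by rewrite I_count_admissible -[n]/(0 + n) -sum_n_ext big_mkcond big_seq1. Qed.

(** * Counting the completions *)

Lemma hockey_stick b t : \sum_(0 <= v < b) 'C(v, t) = 'C(b, t.+1).
Proof.
by elim: b => [|b IH]; [rewrite big_geq | rewrite big_nat_recr //= IH binS].
Qed.

Lemma big_nat_cond_prefix (F : nat -> nat) (P : pred nat) a b n :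
  a <= b <= n -> {in [pred v | a <= v < n], P =1 [pred v | v < b]} ->
  \sum_(a <= v < n | P v) F v = \sum_(a <= v < b) F v.
Proof.
move=> /andP [le_ab le_bn] P_lt; rewrite (big_cat_nat le_ab le_bn) /=.
rewrite [X in _ + X]big_nat_cond [X in _ + X]big_pred0 ?addn0 => [|v].
  rewrite big_nat_cond [RHS]big_nat_cond; apply: eq_bigl => v.
  by case: (boolP (a <= v < b)) => //= range_v; rewrite P_lt ?inE //=; lia.
by case: (boolP (b <= v < n)) => //= range_v; rewrite P_lt ?inE //=; lia.
Qed.

(* Once the forbidden values are exactly those >= b, every completion is a
   strictly decreasing sequence below b. *)
Lemma n_ext_below t b (r : seq nat) :
  (forall v, closes_forbidden v r = (b <= v)) ->
  (exists x1 x2, [/\ x1 \in r, x2 \in r, x1 != x2, b < x1 & b < x2]) ->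
  b <= size r -> n_ext r t = 'C(b, t).
Proof.
elim: t b r => [|t IH] b r closes_r [x1 [x2 [r_x1 r_x2 ne_x12 lt_bx1 lt_bx2]]] le_b.
  by rewrite bin0.
rewrite n_extS (@big_nat_cond_prefix _ _ 0 b); last 2 first.
- lia.
- by move=> v _; rewrite /= closes_r -ltnNge.
rewrite -hockey_stick; apply: eq_big_nat => v /andP [_ lt_vb]; apply: IH => [w||/=].
- rewrite /= closes_r; case: (leqP v w) => [le_vw|lt_wv] /=; last lia.
  apply/orP; left; apply/hasP; have [eq_x1w|ne_x1w] := eqVneq x1 w.
    by exists x2 => //; rewrite -eq_x1w eq_sym ne_x12; lia.
  by exists x1 => //; rewrite ne_x1w; lia.
- by exists x1, x2; rewrite !inE r_x1 r_x2 !orbT; split => //; lia.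
- lia.
Qed.

(* Once the forbidden values are exactly those >= b other than the maximum M,
   a completion is a run of entries M followed by a strictly decreasing
   sequence below b. *)
Lemma n_ext_top_or_below t b M (r : seq nat) :
  b < M -> b \in r -> M \in r -> all (fun x => x <= M) r ->
  (forall v, closes_forbidden v r = (b <= v) && (v != M)) ->
  M <= size r -> n_ext r t = \sum_(d < t.+1) 'C(b, d).
Proof.
elim: t r => [|t IH] r lt_bM r_b r_M le_rM closes_r le_M; first by rewrite big_ord1 bin0.
have le_b : b <= (size r).+1 by lia.
rewrite n_extS (big_cat_nat (leq0n b) le_b) big_ord_recr /= [RHS]addnC; congr (_ + _).
  rewrite (@big_nat_cond_prefix _ _ 0 b b); last 2 first.
  - lia.
  - by move=> v; rewrite !inE closes_r; lia.
  rewrite -hockey_stick; apply: eq_big_nat => v /andP [_ lt_vb].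
  apply: n_ext_below => [w||/=]; last lia.
  - rewrite /= closes_r; case: (leqP v w) => [le_vw|lt_wv] /=; last lia.
    apply/orP; left; apply/hasP; have [eq_bw|ne_bw] := eqVneq b w.
      by exists M => //; rewrite -eq_bw eq_sym neq_ltn lt_bM; lia.
    by exists b => //; rewrite ne_bw; lia.
  - by exists b, M; rewrite !inE r_b r_M !orbT neq_ltn lt_bM; split => //; lia.
rewrite big_nat_cond (eq_bigl (fun v => (b <= v < (size r).+1) && (v == M))) => [|v].
  rewrite -big_nat_cond big_nat1_eq ifT; last lia.
  apply: IH; rewrite ?inE ?r_b ?eqxx ?orbT //= ?leqnn ?le_rM //; last lia.
  move=> v; rewrite closes_r /=; case: hasP => [[x r_x]|_]; last by rewrite andbF.
  by move/allP: le_rM => /(_ x r_x); lia.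
by rewrite /= closes_r; case: (eqVneq v M) => [->|] /=; rewrite ?andbT ?andbF //; lia.
Qed.

(* For a weakly decreasing [r], the largest entry below [head 0 r] (0 if none). *)
Definition second (r : seq nat) := head 0 [seq x <- r | x != head 0 r].

Lemma second_cons v (r : seq nat) :
  second (v :: r) = if v == head 0 r then second r else head 0 r.
Proof.
rewrite /second /= eqxx /=; have [->//|ne_vL] := eqVneq v (head 0 r).
by case: r ne_vL => [|L r] //= ne_vL; rewrite eq_sym ne_vL.
Qed.

(* Completions of length t+1 of a weakly increasing inversion sequence with
   largest entries L > S whose first new entry v is a descent (v < L). *)
Definition n_descent_ext (L S t : nat) :=
  \sum_(0 <= v < S) 'C(v, t) + \sum_(S <= v < L) \sum_(d < t.+1) 'C(v, d).

(* Weakly increasing inversion sequences of length m, reversed. *)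
Fixpoint weak_rinvs (m : nat) : seq (seq nat) :=
  if m is m'.+1 then
    flatten [seq [seq v :: r | v <- index_iota (head 0 r) m] | r <- weak_rinvs m']
  else [:: [::]].

Lemma big_weak_rinvsS (R : Type) (idx : R) (op : Monoid.com_law idx) m
    (F : seq nat -> R) :
  \big[op/idx]_(r <- weak_rinvs m.+1) F r =
  \big[op/idx]_(r <- weak_rinvs m) \big[op/idx]_(head 0 r <= v < m.+1) F (v :: r).
Proof. by rewrite big_flatten big_map; apply: eq_bigr => r _; rewrite big_map. Qed.

Lemma weak_rinvs_spec m (r : seq nat) : r \in weak_rinvs m ->
  [/\ size r = m, sorted geq r & all (fun x => x < m) r].
Proof.
elim: m r => [|m IH] r /=; first by rewrite inE => /eqP ->.
move/flatten_mapP => [r' /IH [size_r' sorted_r' lt_r'] /mapP [v]].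
rewrite mem_index_iota => /andP [le_v lt_v] ->; split => /=.
- by rewrite size_r'.
- by case: r' le_v sorted_r' {size_r' lt_r'} => //= L r' ->.
- by rewrite lt_v; apply/allP => x /(allP lt_r'); apply: ltnW.
Qed.

Lemma head_weak_rinvs m (r : seq nat) : r \in weak_rinvs m -> head 0 r <= m.
Proof.
by move/weak_rinvs_spec => [_ _]; case: r => [|L r] //= /andP [/ltnW].
Qed.

Lemma closes_forbidden_sorted v (r : seq nat) : sorted geq r -> closes_forbidden v r = false.
Proof.
elim: r => [|y r IH] //= sorted_yr; rewrite IH ?(path_sorted sorted_yr) // orbF.
have /allP le_ry := order_path_min (rev_trans leq_trans) sorted_yr.
by apply/negbTE/nandP; right; apply/hasPn => x /le_ry /=; rewrite ltnNge => ->.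
Qed.

Lemma sorted_head_second (r : seq nat) : sorted geq r ->
  let L := head 0 r in let S := second r in
  [/\ forall x, x \in r -> x <= L, forall x, x \in r -> (x == L) || (x <= S),
      S <= L, 0 < S -> S \in r /\ S != L & 0 < L -> L \in r].
Proof.
case: r => [|L r] sorted_r L0 S0; first by split.
have ge_trans : transitive geq := rev_trans leq_trans.
have /allP le_rL := order_path_min ge_trans sorted_r.
have le_L x : x \in L :: r -> x <= L by rewrite inE => /predU1P [->|/le_rL].
have sorted_f : sorted geq [seq x <- r | x != L] by apply: sorted_filter (path_sorted sorted_r).
rewrite /S0 /second /= eqxx /=; split => //.
- move=> x; have [//|ne_xL] := eqVneq x L; rewrite inE (negbTE ne_xL) /= => r_x.
  have : x \in [seq x <- r | x != L] by rewrite mem_filter ne_xL.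
  case: [seq x <- r | x != L] sorted_f => [|S f] //= sorted_Sf.
  by rewrite inE => /predU1P [->|/(allP (order_path_min ge_trans sorted_Sf))].
- case E: [seq x <- r | x != L] => [|S f] //=.
  have : S \in [seq x <- r | x != L] by rewrite E inE eqxx.
  by rewrite mem_filter => /andP [_ /le_rL].
- case E: [seq x <- r | x != L] => [|S f] //= _.
  have : S \in [seq x <- r | x != L] by rewrite E inE eqxx.
  by rewrite mem_filter inE => /andP [-> ->]; rewrite orbT.
- by rewrite inE eqxx.
Qed.

Lemma n_ext_weak t (r : seq nat) : sorted geq r -> head 0 r <= size r ->
  n_ext r t.+1 = \sum_(head 0 r <= v < (size r).+1) n_ext (v :: r) t +
                 n_descent_ext (head 0 r) (second r) t.
Proof.
move=> sorted_r le_L; have closes_r v := closes_forbidden_sorted v sorted_r.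
have [le_rL r_LS le_SL r_S r_L] := sorted_head_second sorted_r.
move: (head 0 r) (second r) le_L le_rL r_LS le_SL r_S r_L => L S le_L le_rL r_LS le_SL r_S r_L.
rewrite n_extS (eq_bigl xpredT) => [|v]; last by rewrite closes_r.
rewrite (big_cat_nat (leq0n L)) 1?[RHS]addnC /=; last lia.
rewrite (big_cat_nat (leq0n S) le_SL) /=; congr (_ + _ + _).
  apply: eq_big_nat => v /andP [_ lt_vS].
  have [S_r ne_SL] := r_S (leq_ltn_trans (leq0n v) lt_vS).
  have L_r : L \in r by apply: r_L; lia.
  apply: n_ext_below => [w||/=]; last lia.
  - rewrite /= closes_r orbF; case: (leqP v w) => [le_vw|lt_wv] /=; last lia.
    apply/hasP; have [eq_Sw|ne_Sw] := eqVneq S w.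
      by exists L; rewrite // -eq_Sw eq_sym ne_SL; lia.
    by exists S => //; rewrite ne_Sw; lia.
  - by exists L, S; rewrite !inE S_r L_r !orbT eq_sym; split => //; lia.
apply: eq_big_nat => v /andP [le_Sv lt_vL].
have L_r : L \in r by apply: r_L; lia.
apply: (@n_ext_top_or_below t v L) => [||||w|/=]; last lia.
- by [].
- by rewrite inE eqxx.
- by rewrite inE L_r orbT.
- by rewrite /= (ltnW lt_vL); apply/allP.
- rewrite /= closes_r orbF; congr (_ && _); apply/hasP/idP => [[x r_x]|ne_wL].
    by case/orP: (r_LS x r_x) => [/eqP ->|le_xS]; rewrite eq_sym //; lia.
  by exists L; rewrite // eq_sym ne_wL; lia.
Qed.

Lemma sum_n_ext_weak t m :
  \sum_(r <- weak_rinvs m) n_ext r t = size (weak_rinvs (m + t)) +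
  \sum_(k < t) \sum_(r <- weak_rinvs (m + k)) n_descent_ext (head 0 r) (second r) (t.-1 - k).
Proof.
elim: t m => [|t IH] m.
  by rewrite addn0 big_ord0 addn0 -sum1_size; apply: eq_bigr.
have -> : \sum_(r <- weak_rinvs m) n_ext r t.+1 =
    \sum_(r <- weak_rinvs m.+1) n_ext r t +
    \sum_(r <- weak_rinvs m) n_descent_ext (head 0 r) (second r) t.
  rewrite big_weak_rinvsS -big_split /=; apply: eq_big_seq => r r_m.
  have [size_r sorted_r _] := weak_rinvs_spec r_m.
  by rewrite -n_extS n_ext_weak ?size_r ?(head_weak_rinvs r_m).
rewrite IH big_ord_recl addSnnS -addnA addn0 subn0 [X in _ + X]addnC.
congr (_ + (_ + _)); apply: eq_bigr => k _; rewrite lift0 addSnnS.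
by apply: eq_bigr => r _; congr n_descent_ext; lia.
Qed.

Lemma I_countE n : I_count n = size (weak_rinvs n) +
  \sum_(k < n) \sum_(r <- weak_rinvs k) n_descent_ext (head 0 r) (second r) (n.-1 - k).
Proof. by rewrite I_count_n_ext; have := sum_n_ext_weak n 0; rewrite /= big_seq1. Qed.

Import GRing.Theory.
Local Open Scope ring_scope.

(** * Truncated power series *)

Section TruncatedSeries.
Variables (F : fieldType) (N : nat).
Implicit Types (p q a b : {poly F}) (f g : nat -> {poly F}).

Definition eq_modX p q := 'X^(N.+1) %| p - q.

Lemma eq_modXP p q : eq_modX p q <-> (forall i, (i <= N)%N -> p`_i = q`_i).
Proof.
split=> [/dvdpP [h eq_h] i le_iN | eq_pq].
  by apply/eqP; rewrite -subr_eq0 -coefB eq_h coefMXn ltnS le_iN.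
apply/dvdpP; exists (drop_poly N.+1 (p - q)).
rewrite -[LHS](poly_take_drop N.+1) [take_poly _ _](_ : _ = 0) ?add0r //.
by apply/polyP => i; rewrite coef_take_poly coefB coef0 ltnS; case: leqP => // /eq_pq ->; rewrite subrr.
Qed.

Lemma eq_modX_refl p : eq_modX p p.
Proof. by rewrite /eq_modX subrr dvdp0. Qed.

Lemma eq_modX_sym p q : eq_modX p q -> eq_modX q p.
Proof. by rewrite /eq_modX -opprB dvdpNr. Qed.

Lemma eq_modX_trans p q r : eq_modX p q -> eq_modX q r -> eq_modX p r.
Proof. by move=> pq qr; rewrite /eq_modX -[p](subrK q) -addrA dvdp_add. Qed.

Lemma eq_modXD p q p' q' : eq_modX p q -> eq_modX p' q' -> eq_modX (p + p') (q + q').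
Proof. by move=> pq pq'; rewrite /eq_modX opprD addrACA dvdp_add. Qed.

Lemma eq_modXM p q p' q' : eq_modX p q -> eq_modX p' q' -> eq_modX (p * p') (q * q').
Proof.
rewrite /eq_modX => pq pq'; have -> : p * p' - q * q' = (p - q) * p' + q * (p' - q') by ring.
by apply: dvdp_add; [apply: dvdp_mulr | apply: dvdp_mull].
Qed.

Lemma eq_modXMl a p q : eq_modX p q -> eq_modX (a * p) (a * q).
Proof. exact/eq_modXM/eq_modX_refl. Qed.

Lemma eq_modX_exp n p q : eq_modX p q -> eq_modX (p ^+ n) (q ^+ n).
Proof.
by move=> pq; elim: n => [|n IH]; rewrite ?eq_modX_refl // !exprS eq_modXM.
Qed.

Lemma eq_modX_rearrange p q p' q' : p - q = p' - q' -> eq_modX p' q' -> eq_modX p q.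
Proof. by rewrite /eq_modX => ->. Qed.

Lemma dvdp_Xn_exp q n : q`_0 = 0 -> 'X^n %| q ^+ n.
Proof.
move=> q0; apply: dvdp_exp2r; apply/dvdpP; exists (drop_poly 1 q).
rewrite -[LHS](poly_take_drop 1) expr1 [take_poly _ _](_ : _ = 0) ?add0r //.
by apply/polyP => -[|i]; rewrite coef_take_poly coef0.
Qed.

Definition gf q f := \sum_(m < N.+1) q ^+ m * f m.

Lemma eq_gf q f g : f =1 g -> gf q f = gf q g.
Proof. by move=> fg; apply: eq_bigr => m _; rewrite fg. Qed.

Lemma gfD q f g : gf q (fun m => f m + g m) = gf q f + gf q g.
Proof. by rewrite -big_split; apply: eq_bigr => m _; rewrite mulrDr. Qed.

Lemma gfN q f : gf q (fun m => - f m) = - gf q f.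
Proof. by rewrite -sumrN; apply: eq_bigr => m _; rewrite mulrN. Qed.

Lemma gfB q f g : gf q (fun m => f m - g m) = gf q f - gf q g.
Proof. by rewrite gfD gfN. Qed.

Lemma gfMl q a f : gf q (fun m => a * f m) = a * gf q f.
Proof. by rewrite mulr_sumr; apply: eq_bigr => m _; rewrite mulrCA. Qed.

Lemma gf_exprS q y (c : nat -> F) :
  gf q (fun m => y ^+ m.+1 * (c m)%:P) = y * gf (q * y) (fun m => (c m)%:P).
Proof. by rewrite mulr_sumr; apply: eq_bigr => m _; rewrite exprMn exprS; ring. Qed.

Lemma gf_shift q f :
  q * gf q (fun m => f m.+1) = gf q f - f 0%N + q ^+ N.+1 * f N.+1.
Proof.
have gf_split : gf q f + q ^+ N.+1 * f N.+1 =
    f 0%N + \sum_(m < N.+1) q ^+ m.+1 * f m.+1.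
  rewrite /gf -(big_ord_recr N.+1 (fun m : 'I_N.+2 => q ^+ m * f m)) /=.
  by rewrite big_ord_recl /= expr0 mul1r.
rewrite addrAC gf_split addrAC subrr add0r /gf mulr_sumr; apply: eq_bigr => m _.
by rewrite exprS mulrA.
Qed.

Lemma gf_shift_modX q f : q`_0 = 0 ->
  eq_modX (q * gf q (fun m => f m.+1)) (gf q f - f 0%N).
Proof.
move=> q0; rewrite gf_shift /eq_modX addrAC subrr add0r.
by rewrite dvdp_mulr // dvdp_Xn_exp.
Qed.

Lemma eq_modX_gf a b f : eq_modX a b -> eq_modX (gf a f) (gf b f).
Proof.
move=> ab; rewrite /gf; elim/big_ind2: _ => [|p1 q1 p2 q2|m _]; first exact: eq_modX_refl.
  exact: eq_modXD.
by apply: eq_modXM; [apply: eq_modX_exp | apply: eq_modX_refl].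
Qed.

Lemma coef_gfX f n : (n <= N)%N -> (gf 'X f)`_n = \sum_(k < n.+1) (f k)`_(n - k).
Proof.
move=> le_nN; rewrite coef_sum.
under eq_bigr do rewrite coefXnM.
rewrite -(big_mkord xpredT (fun k => if (n < k)%N then 0 else (f k)`_(n - k))).
rewrite (big_cat_nat (n := n.+1)) //= [X in _ + X]big1_seq ?addr0 => [|k].
  by rewrite big_mkord; apply: eq_bigr => k _; rewrite ltnNge -ltnS ltn_ord.
by rewrite mem_index_iota => /andP [_ /andP [lt_nk _]]; rewrite lt_nk.
Qed.

End TruncatedSeries.

Definition trunc N (f : fps) : {poly rat} := \poly_(i < N.+1) f i.

Lemma coef_mul_trunc N (p : {poly rat}) (g : fps) k : (k <= N)%N ->
  (p * trunc N g)`_k = fps_mul (fps_of_poly p) g k.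
Proof.
move=> le_kN; rewrite coefM; apply: eq_bigr => i _.
by rewrite coef_poly ifT //; lia.
Qed.

Lemma coef_trunc_mul N (f g : fps) k : (k <= N)%N ->
  (trunc N f * trunc N g)`_k = fps_mul f g k.
Proof.
move=> le_kN; rewrite coef_mul_trunc //; apply: eq_bigr => i _.
have lt_ik := ltn_ord i.
by rewrite /fps_of_poly coef_poly ifT //; lia.
Qed.

Lemma sum_exp_range (R : comRingType) (y : R) a n : (a <= n)%N ->
  (y - 1) * \sum_(a <= v < n) y ^+ v = y ^+ n - y ^+ a.
Proof.
move=> le_an; rewrite mulr_sumr; apply: telescope_sumr_eq => // k _.
by rewrite exprS; ring.
Qed.

Lemma sum_linear_exp_range (R : comRingType) (y : R) a n : (a <= n)%N ->
  (y - 1) * \sum_(a <= v < n) (n - v)%:R * y ^+ v =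
  y * \sum_(a <= v < n) y ^+ v - (n - a)%:R * y ^+ a.
Proof.
elim: n => [|n IH] le_an.
  by rewrite (_ : a = 0%N) ?big_geq ?subnn ?mulr0 ?mul0r ?subrr //; lia.
have [lt_na|le_an'] := ltnP n a.
  by rewrite (_ : a = n.+1) ?big_geq ?subnn ?mulr0 ?mul0r ?subrr //; lia.
rewrite !big_nat_recr //= subSnn mul1r.
under eq_big_nat => v /andP [_ lt_vn] do rewrite (subSn (ltnW lt_vn)) -addn1 natrD mulrDl mul1r.
rewrite big_split /= !mulrDr IH // sum_exp_range // subSn // -addn1 natrD.
ring.
Qed.

(** * The generating function of I *)

Definition catalan m : rat := (size (weak_rinvs m))%:R.
Definition head_sum m (y : {poly rat}) := \sum_(r <- weak_rinvs m) y ^+ head 0 r.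
Definition second_sum m : {poly rat} := \sum_(r <- weak_rinvs m) (1 + 'X) ^+ second r.
Definition ascent_sum m : {poly rat} :=
  \sum_(r <- weak_rinvs m) (m - head 0 r)%:R * (1 + 'X) ^+ head 0 r.

Lemma sum_const_weak_rinvs m (x : {poly rat}) :
  \sum_(r <- weak_rinvs m) x = (catalan m)%:P * x.
Proof. by rewrite big_const_seq count_predT iter_addr_0 polyC_natr mulr_natl. Qed.

Lemma head_sum0 y : head_sum 0 y = 1.
Proof. by rewrite /head_sum big_seq1 expr0. Qed.

Lemma head_sum_rec m y :
  (y - 1) * head_sum m.+1 y = y ^+ m.+1 * (catalan m)%:P - head_sum m y.
Proof.
rewrite /head_sum big_weak_rinvsS mulr_sumr.
under eq_big_seq => r /head_weak_rinvs le_Lm do rewrite sum_exp_range 1?leqW //.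
by rewrite sumrB sum_const_weak_rinvs mulrC.
Qed.

Lemma ascent_sum0 : ascent_sum 0 = 0.
Proof. by rewrite /ascent_sum big_seq1 subnn mul0r. Qed.

Lemma ascent_sum_rec m : 'X * ascent_sum m.+1 =
  (1 + 'X) * head_sum m.+1 (1 + 'X) - head_sum m (1 + 'X) - ascent_sum m.
Proof.
rewrite /ascent_sum /head_sum !big_weak_rinvsS [LHS]mulr_sumr.
rewrite [_ * \sum_(r <- weak_rinvs m) _]mulr_sumr -!sumrB.
apply: eq_big_seq => r /head_weak_rinvs le_Lm.
rewrite -[X in X * _](addKr 1) addrC sum_linear_exp_range 1?leqW // subSn //.
by rewrite -natr1 /=; ring.
Qed.

Lemma second_sum0 : second_sum 0 = 1.
Proof. by rewrite /second_sum big_seq1 expr0. Qed.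

Lemma second_sumS m : second_sum m.+1 = second_sum m + ascent_sum m.
Proof.
rewrite /second_sum /ascent_sum big_weak_rinvsS -big_split /=.
apply: eq_big_seq => r /head_weak_rinvs le_Lm.
rewrite big_ltn ?ltnS // second_cons eqxx; congr (_ + _).
rewrite (eq_big_nat _ _ (F2 := fun=> (1 + 'X) ^+ head 0 r)) => [|v /andP [lt_Lv _]].
  by rewrite sumr_const_nat mulr_natl subSS.
by rewrite second_cons ifN // gtn_eqF.
Qed.

Definition geo N : {poly rat} := \sum_(m < N.+1) 'X^m.

Lemma mul1subX_geo N : (1 - 'X) * geo N = 1 - 'X^(N.+1).
Proof. by rewrite -[1 - 'X]opprB mulNr -subrX1 opprB. Qed.

Lemma coef_exp1X v j : ((1 + 'X : {poly rat}) ^+ v)`_j = 'C(v, j)%:R.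
Proof.
elim: v j => [|v IH] j; first by rewrite expr0 coef1 bin0n.
rewrite exprS mulrDl mul1r coefD coefXM IH.
by case: j => [|j] /=; rewrite ?bin0 ?addr0 // IH binS natrD addrC.
Qed.

Lemma coef_geo N k : (geo N)`_k = (k <= N)%:R.
Proof.
elim: N => [|N IH]; first by rewrite /geo big_ord1 coefXn leqn0.
rewrite /geo big_ord_recr /= -/(geo N) coefD IH coefXn.
rewrite [(k <= N.+1)%N]leq_eqVlt ltnS orbC.
by case: (eqVneq k N.+1) => [->|_]; rewrite ?ltnn ?orbT ?orbF ?add0r ?addr0.
Qed.

Lemma coef_exp1X_geo N v j : (j <= N)%N ->
  ((1 + 'X) ^+ v * geo N)`_j = (\sum_(d < j.+1) 'C(v, d))%:R.
Proof.
move=> le_jN; rewrite coefM natr_sum; apply: eq_bigr => i _.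
by rewrite coef_exp1X coef_geo (leq_trans (leq_subr _ _) le_jN) mulr1.
Qed.

(* X times the generating function of t |-> n_descent_ext L S t, up to order N. *)
Definition descent_poly N L S : {poly rat} :=
  \sum_(0 <= v < S) 'X * (1 + 'X) ^+ v +
  \sum_(S <= v < L) 'X * ((1 + 'X) ^+ v * geo N).

Lemma coef_descent_poly0 N L S : (descent_poly N L S)`_0 = 0.
Proof. by rewrite coefD !coef_sum !big1 ?addr0 // => v _; rewrite coefXM. Qed.

Lemma coef_descent_polyS N L S t : (t < N)%N ->
  (descent_poly N L S)`_t.+1 = (n_descent_ext L S t)%:R.
Proof.
move=> lt_tN; rewrite coefD !coef_sum natrD !natr_sum.
congr (_ + _); apply: eq_bigr => v _; rewrite coefXM /=.
  by rewrite coef_exp1X.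
by rewrite coef_exp1X_geo // ltnW.
Qed.

Lemma descent_polyE N L S : (S <= L)%N ->
  descent_poly N L S =
  (1 + 'X) ^+ S - 1 + ((1 + 'X) ^+ L - (1 + 'X) ^+ S) * geo N.
Proof.
move=> le_SL; rewrite /descent_poly -mulr_sumr.
under [X in _ + X]eq_bigr do rewrite mulrA.
rewrite -mulr_suml -mulr_sumr.
have := sum_exp_range (1 + 'X : {poly rat}) (leq0n S).
have := sum_exp_range (1 + 'X : {poly rat}) le_SL.
by rewrite addrAC subrr add0r expr0 => -> ->.
Qed.

Lemma weak_rinvs_split N k :
  second_sum k + (head_sum k (1 + 'X) - second_sum k) * geo N =
  (catalan k)%:P + \sum_(r <- weak_rinvs k) descent_poly N (head 0 r) (second r).
Proof.
rewrite (eq_big_seq (fun r => (1 + 'X) ^+ second r - 1 +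
    ((1 + 'X) ^+ head 0 r - (1 + 'X) ^+ second r) * geo N)) => [|r]; last first.
  move=> /weak_rinvs_spec [_ /sorted_head_second [_ _ le_SL _ _] _].
  exact: descent_polyE.
rewrite big_split /= !sumrB -mulr_suml sumrB sum_const_weak_rinvs mulr1.
by rewrite /second_sum /head_sum; ring.
Qed.

Lemma I_count_trunc_modX N :
  eq_modX N (trunc N (fun i => (I_count i)%:R))
    (gf N 'X second_sum +
     (gf N 'X (fun m => head_sum m (1 + 'X)) - gf N 'X second_sum) * geo N).
Proof.
have -> : gf N 'X second_sum +
    (gf N 'X (fun m => head_sum m (1 + 'X)) - gf N 'X second_sum) * geo N =
    gf N 'X (fun k => (catalan k)%:P +
      \sum_(r <- weak_rinvs k) descent_poly N (head 0 r) (second r)).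
  rewrite /gf -sumrB mulr_suml -big_split /=; apply: eq_bigr => k _.
  by rewrite -weak_rinvs_split; ring.
apply/eq_modXP => n le_nN; rewrite coef_poly ltnS le_nN coef_gfX // big_ord_recr /=.
rewrite subnn coefD coefC coef_sum [X in _ + (_ + X)]big1 => [|r _]; last exact: coef_descent_poly0.
rewrite addr0 I_countE natrD natr_sum addrC /catalan; congr (_ + _).
apply: eq_bigr => k _; have lt_kn := ltn_ord k.
rewrite coefD coefC subn_eq0 leqNgt lt_kn add0r coef_sum natr_sum.
by apply: eq_bigr => r _; rewrite (_ : n - k = (n.-1 - k).+1)%N ?coef_descent_polyS //; lia.
Qed.

Section Kernel.
Variable N : nat.

Let catalan_gf (z : {poly rat}) := gf N z (fun m => (catalan m)%:P).

Lemma head_sum_kernelD (q : {poly rat}) : q`_0 = 0 ->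
  eq_modX N (2%:R * gf N q (fun m => head_sum m (1 + q))) (1 + (1 + q) * catalan_gf (q * (1 + q))).
Proof.
move=> q0; have := gf_shift_modX N (fun m => head_sum m (1 + q)) q0.
have -> : q * gf N q (fun m => head_sum m.+1 (1 + q)) =
    (1 + q) * catalan_gf (q * (1 + q)) - gf N q (fun m => head_sum m (1 + q)).
  rewrite -gfMl -gf_exprS -gfB; apply: eq_gf => m.
  by rewrite -head_sum_rec (_ : 1 + q - 1 = q) //; ring.
by rewrite head_sum0 => /eq_modX_sym; apply: eq_modX_rearrange; ring.
Qed.

Lemma head_sum_kernelB (q : {poly rat}) : q`_0 = 0 ->
  eq_modX N 1 ((1 - q) * catalan_gf (q * (1 - q))).
Proof.
move=> q0; have := gf_shift_modX N (fun m => head_sum m (1 - q)) q0.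
have -> : q * gf N q (fun m => head_sum m.+1 (1 - q)) =
    gf N q (fun m => head_sum m (1 - q)) - (1 - q) * catalan_gf (q * (1 - q)).
  rewrite -gfMl -gf_exprS -gfB; apply: eq_gf => m.
  have := head_sum_rec m (1 - q); rewrite (_ : 1 - q - 1 = - q) ?mulNr; last by ring.
  by move/eqP; rewrite eqr_oppLR => /eqP ->; ring.
by rewrite head_sum0; apply: eq_modX_rearrange; ring.
Qed.

Let E := gf N 'X (fun m => head_sum m (1 + 'X)).
Let G := gf N 'X second_sum.
Let H := gf N 'X ascent_sum.
Let V := catalan_gf ('X * (1 + 'X)).
Let I_poly := trunc N (fun i => (I_count i)%:R).

Let X0 : ('X : {poly rat})`_0 = 0. Proof. by rewrite coefX. Qed.

Lemma geo_modX : eq_modX N ((1 - 'X) * geo N) 1.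
Proof. by rewrite /eq_modX mul1subX_geo addrAC subrr add0r dvdpNr. Qed.

Lemma I_gf_eqn : eq_modX N ((1 - 'X) * I_poly) (E - 'X * G).
Proof.
apply: eq_modX_trans (eq_modXMl (1 - 'X) (I_count_trunc_modX N)) _.
by apply: eq_modX_rearrange (eq_modXMl (E - G) geo_modX); rewrite -/E -/G; ring.
Qed.

Lemma second_gf_eqn : eq_modX N ((1 - 'X) * G) (1 + 'X * H).
Proof.
have := gf_shift_modX N second_sum X0.
rewrite (eq_gf N 'X second_sumS) gfD mulrDr second_sum0 -/G -/H => /eq_modX_sym.
by apply: eq_modX_rearrange; ring.
Qed.

Lemma ascent_gf_eqn : eq_modX N (2%:R * 'X * H) ((1 + 'X) * (E - 1) - 'X * E).
Proof.
have := gf_shift_modX N ascent_sum X0; rewrite ascent_sum0 subr0 -/H => shiftH.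
have := gf_shift_modX N (fun m => head_sum m (1 + 'X)) X0.
rewrite head_sum0 -/E => shiftE.
set A := gf N 'X (fun m => ascent_sum m.+1) in shiftH *.
set B := gf N 'X (fun m => head_sum m.+1 (1 + 'X)) in shiftE *.
have recA : 'X * A = (1 + 'X) * B - E - H.
  by rewrite -!gfMl -!gfB; apply: eq_gf => m; rewrite ascent_sum_rec.
rewrite /eq_modX recA in shiftH *.
rewrite (_ : _ - _ = (1 + 'X) * ('X * B - (E - 1)) - 'X * ((1 + 'X) * B - E - H - H)).
  by apply: dvdp_sub; apply: dvdp_mull.
by ring.
Qed.

Section SquareRoot.
Variable s : {poly rat}.
Hypothesis s0 : s`_0 = 1.
Hypothesis s_sqrt : eq_modX N (s * s) (1 - 4%:R *: 'X - 4%:R *: 'X^2).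

Let u := (2%:R^-1)%:P * (1 - s).

Lemma sqrt_kernel_root : s = 1 - 2%:R * u.
Proof.
by rewrite /u mulrA -polyC_natr -polyCM mulfV ?pnatr_eq0 // mul1r opprB addrC subrK.
Qed.

Lemma kernel_root0 : u`_0 = 0.
Proof. by rewrite /u coefCM coefB coef1 s0 subrr mulr0. Qed.

Lemma kernel_root_eqn : eq_modX N (u * (1 - u)) ('X * (1 + 'X)).
Proof.
move: s_sqrt; rewrite /eq_modX sqrt_kernel_root !scaler_nat => dvd_s.
have inv4 : (4%:R^-1)%:P * 4%:R = 1 :> {poly rat}.
  by rewrite -polyC_natr -polyCM mulVf ?pnatr_eq0.
rewrite -[_ - _]mul1r -{1}inv4 -mulrA.
rewrite (_ : 4%:R * _ = - ((1 - 2%:R * u) * (1 - 2%:R * u) -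
    (1 - 'X *+ 4 - 'X ^+ 2 *+ 4))); last by ring.
by rewrite dvdp_mull // dvdpNr.
Qed.

Lemma catalan_gf_kernel_root : eq_modX N ((1 - u) * V) 1.
Proof.
apply: eq_modX_sym; apply: eq_modX_trans (head_sum_kernelB kernel_root0) _.
exact/eq_modXMl/eq_modX_gf/kernel_root_eqn.
Qed.

Lemma kernel_rootE : eq_modX N ('X * (1 + 'X) * V) u.
Proof.
apply: eq_modX_trans (eq_modXM (eq_modX_sym kernel_root_eqn) (eq_modX_refl N V)) _.
by rewrite -mulrA -[u in X in eq_modX _ _ X]mulr1; apply: eq_modXMl catalan_gf_kernel_root.
Qed.

Lemma I_gf_closed_form :
  eq_modX N (8%:R *: ('X * (1 - 'X) ^+ 2) * I_poly)
    (2%:R + 'X - 10%:R *: 'X^2 + 4%:R *: 'X^3 - (2%:R - 3%:R *: 'X) * s).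
Proof.
move: I_gf_eqn second_gf_eqn ascent_gf_eqn (head_sum_kernelD X0) kernel_rootE.
rewrite /eq_modX -/V => I_eqn G_eqn H_eqn E_eqn V_eqn.
rewrite sqrt_kernel_root !scaler_nat.
(* The multipliers eliminate G, H, E and V from the five congruences. *)
rewrite (_ : _ - _ = 8%:R * 'X * (1 - 'X) * ((1 - 'X) * I_poly - (E - 'X * G))
  + (- 8%:R * 'X ^+ 2) * ((1 - 'X) * G - (1 + 'X * H))
  + (- 4%:R * 'X ^+ 2) * (2%:R * 'X * H - ((1 + 'X) * (E - 1) - 'X * E))
  + (4%:R * 'X - 6%:R * 'X ^+ 2) * (2%:R * E - (1 + (1 + 'X) * V))
  + (4%:R - 6%:R * 'X) * ('X * (1 + 'X) * V - u)); last by rewrite /V; ring.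
by repeat apply: dvdp_add; apply: dvdp_mull.
Qed.

End SquareRoot.

End Kernel.

Theorem mainTheorem3 (s : fps) :
  s 0%N = 1 ->
  (forall n, fps_mul s s n = fps_of_poly (1 - 4%:R *: 'X - 4%:R *: 'X^2) n) ->
  forall n : nat,
    fps_mul (fps_of_poly (8%:R *: ('X * (1 - 'X) ^+ 2)))
            (fun k => (I_count k)%:R) n
    = fps_of_poly (2%:R + 'X - 10%:R *: 'X^2 + 4%:R *: 'X^3) n
      - fps_mul (fps_of_poly (2%:R - 3%:R *: 'X)) s n.
Proof.
move=> s0 s_sqrt n.
have s0_trunc : (trunc n s)`_0 = 1 by rewrite coef_poly.
have trunc_sqrt : eq_modX n (trunc n s * trunc n s) (1 - 4%:R *: 'X - 4%:R *: 'X^2).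
  by apply/eq_modXP => k le_kn; rewrite coef_trunc_mul.
move/eq_modXP: (I_gf_closed_form s0_trunc trunc_sqrt) => /(_ n (leqnn n)).
by rewrite coefB !coef_mul_trunc.
Qed.
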